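(* Assume the subgraph $\mathcal G_{\sigma(t)}$ is undirected for all $t\ge0$, and that there exist $T_{\mathrm c}>0$ and a subsequence $\{t_{j_k}:k=0,1,2,\dots\}$ of the switching instants with $t_{j_0}=0$ and $t_{j_{k+1}}-t_{j_k}\le T_{\mathrm c}$, such that for every $k$ every node $i\in\{1,\dots,N\}$ is reachable from node $0$ in the union graph $\bigcup_{t_j\in[t_{j_k},t_{j_{k+1}})}\bar{\mathcal G}_{\sigma(t_j)}$. Then there exists $0<\delta<1$ such that for every positive integer $\ell$, $$\left\|\prod_{r=j_k}^{j_{k+\ell}-1}P_{\sigma(t_r)}\right\|\le\delta^{\ell}\quad\text{for all }k=0,1,2,\dots.$$
   Context: $\sigma:[0,\infty)\to\mathcal P=\{1,\dots,n_0\}$ is a piecewise constant switching signal: there are switching instants $0=t_0<t_1<\cdots$ and a dwell time $\tau>0$ with $t_{j+1}-t_j\ge\tau$, and $\sigma$ is constant on each $[t_j,t_{j+1})$. For each $p\in\mathcal P$, $\bar{\mathcal G}_p$ is a graph on nodes $\{0,1,\dots,N\}$ with edge set $\bar{\mathcal E}_p$ of ordered pairs $(j,i)$, $j\ne i$; $a_{ij}(t)=1$ if $(j,i)\in\bar{\mathcal E}_{\sigma(t)}$, else $0$. $\mathcal G_{\sigma(t)}$ is the subgraph on $\{1,\dots,N\}$ with the edges of $\bar{\mathcal E}_{\sigma(t)}$ among those nodes (undirected: $(i,j)$ edge iff $(j,i)$ edge), with Laplacian $\mathcal L_{\sigma(t)}$ ($l_{ii}=\sum_{j=1}^Na_{ij}(t)$,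 $l_{ij}=-a_{ij}(t)$, $i\ne j$). $\Delta_{\sigma(t)}=\mathrm{diag}(a_{10}(t),\dots,a_{N0}(t))$, $\mathcal H_{\sigma(t)}=\mathcal L_{\sigma(t)}+\Delta_{\sigma(t)}$, and $P_{\sigma(t)}$ is the orthogonal projection of $\mathbb{R}^N$ onto $\ker\mathcal H_{\sigma(t)}$ (zero matrix if the kernel is trivial). Node $i$ is reachable from $0$ if the graph has edges $(0,i_2),(i_2,i_3),\dots,(i_s,i)$; the union graph has the union of edge sets. $\prod_{r=m}^n\Xi_r=\Xi_n\cdots\Xi_m$. $\|\cdot\|$ is the matrix norm induced by the Euclidean norm. *)

From HB Require Import structures.
From mathcomp Require Import all_boot all_order all_algebra.
From mathcomp Require Import classical_sets reals.
Set Implicit Arguments. Unset Strict Implicit. Unset Printing Implicit Defensive.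
Import Order.TTheory GRing.Theory Num.Theory.
Local Open Scope ring_scope.
Local Open Scope classical_set_scope.

Section Defs.
Variable R : realType.

Definition dotv (N : nat) (x y : 'cV[R]_N) : R := \sum_(i < N) x i 0 * y i 0.
Definition enorm (N : nat) (x : 'cV[R]_N) : R := Num.sqrt (dotv x x).

Definition opnorm (N : nat) (A : 'M[R]_N) : R :=
  sup [set enorm (A *m x) | x in [set x : 'cV[R]_N | enorm x <= 1]].

Definition is_orth_proj (N : nat) (P : 'M[R]_N) (S : set 'cV[R]_N) : Prop :=
  forall x : 'cV[R]_N, S (P *m x) /\ (forall y, S y -> dotv (x - P *m x) y = 0).

(* Graphs on nodes {0,...,N} = 'I_N.+1; E j i means (j,i) is an edge.
   Follower node i (1 <= i <= N) is lift ord0 i for i : 'I_N. *)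
Definition node (N : nat) (i : 'I_N) : 'I_N.+1 := lift ord0 i.

Definition adj (N : nat) (E : rel 'I_N.+1) (i j : 'I_N.+1) : R := (E j i)%:R.

Definition laplacian (N : nat) (E : rel 'I_N.+1) : 'M[R]_N :=
  \matrix_(i, j) (if i == j then \sum_(l < N) adj E (node i) (node l)
                  else - adj E (node i) (node j)).

Definition leader_diag (N : nat) (E : rel 'I_N.+1) : 'M[R]_N :=
  \matrix_(i, j) (if i == j then adj E (node i) ord0 else 0).

Definition Hmat (N : nat) (E : rel 'I_N.+1) : 'M[R]_N :=
  laplacian E + leader_diag E.

Definition kerH (N : nat) (E : rel 'I_N.+1) : set 'cV[R]_N :=
  [set x | Hmat E *m x = 0].

(* ordered product  F (n-1) * ... * F m  *)
Definition lprod (N : nat) (F : nat -> 'M[R]_N) (m n : nat) : 'M[R]_N :=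
  foldl (fun A r => F r *m A) 1%:M (index_iota m n).

End Defs.

Definition union_rel (n0 N : nat) (E : 'I_n0 -> rel 'I_N.+1) (s : nat -> 'I_n0)
  (m n : nat) : rel 'I_N.+1 :=
  fun a b => has (fun r => E (s r) a b) (index_iota m n).

(** The squared norm lost along a window of projections, D = |x|^2 - |Pi x|^2,
    dominates (Pythagoras) every squared increment of the partial products, so x stays
    within O(L sqrt D) of each of them, L being the window length.  The partial
    product after step r lies in ker H_{sigma(t_r)}, hence |H_p x| = O(sqrt D)
    for every mode p active in the window.  Joint reachability from the leader
    makes the common kernel of these H_p trivial by a maximum principle (which
    needs no symmetry of the graphs), so the Gram matrix sum_p H_p^T H_p is
    invertible and |x| = O(sqrt D), i.e. |Pi x|^2 <= (1 - 1/C) |x|^2.  The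
    constant C is uniform: the dwell time bounds L by Tc / tau and there are
    finitely many sets of modes. *)
From HB Require Import structures.
From mathcomp Require Import all_boot all_order all_algebra.
From mathcomp Require Import classical_sets reals.
From mathcomp Require Import lra zify.
Import Order.TTheory GRing.Theory Num.Theory.
Set Implicit Arguments. Unset Strict Implicit. Unset Printing Implicit Defensive.
Local Open Scope ring_scope.

Lemma connect_closed_backward (T : finType) (e : rel T) (S : pred T) :
  (forall a b, e a b -> S b -> S a) -> forall a b, connect e a b -> S b -> S a.
Proof.
move=> Sback a b /connectP [p]; elim: p a => [|c p IHp] a /= => [_ -> //|].
by case/andP=> eac pc bE Sb; apply: Sback eac (IHp c pc bE Sb).
Qed.

Section Norms.
Variables (R : realType) (N : nat).
Implicit Types (x y : 'cV[R]_N) (A : 'M[R]_N).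

Definition sqnorm x := dotv x x.
Definition l1norm x := \sum_(i < N) `|x i 0|.
Definition mx_abs_sum A := \sum_(i < N) \sum_(j < N) `|A i j|.

Lemma dotvC x y : dotv x y = dotv y x.
Proof. by apply: eq_bigr => i _; rewrite mulrC. Qed.

Lemma dotvDl x y z : dotv (x + y) z = dotv x z + dotv y z.
Proof. by rewrite /dotv -big_split; apply: eq_bigr => i _; rewrite mxE mulrDl. Qed.

Lemma dotvDr x y z : dotv z (x + y) = dotv z x + dotv z y.
Proof. by rewrite !(dotvC z) dotvDl. Qed.

Lemma dotv_trmx x y : dotv x y = (x^T *m y) 0 0.
Proof. by rewrite mxE; apply: eq_bigr => i _; rewrite mxE. Qed.

Lemma sqnorm_ge0 x : 0 <= sqnorm x.
Proof. by apply: sumr_ge0 => i _; rewrite -expr2 sqr_ge0. Qed.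

Lemma sqnorm_eq0 x : (sqnorm x == 0) = (x == 0).
Proof.
apply/idP/eqP => [|->]; last by rewrite /sqnorm /dotv big1 // => i _; rewrite mxE mul0r.
rewrite psumr_eq0 => [/allP x0|i _]; last by rewrite -expr2 sqr_ge0.
apply/matrixP => i j; rewrite (ord1 j) mxE.
by apply/eqP; rewrite -sqrf_eq0 expr2; apply: x0; rewrite mem_index_enum.
Qed.

Lemma l1norm_ge0 x : 0 <= l1norm x.
Proof. exact: sumr_ge0. Qed.

Lemma mx_abs_sum_ge0 A : 0 <= mx_abs_sum A.
Proof. by apply: sumr_ge0 => i _; apply: sumr_ge0. Qed.

Lemma mx_abs_sum_le_sum (I : finType) (F : I -> 'M[R]_N) i :
  mx_abs_sum (F i) <= \sum_j mx_abs_sum (F j).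
Proof. by rewrite (bigD1 i) //= lerDl sumr_ge0 // => j _; apply: mx_abs_sum_ge0. Qed.

Lemma abs_coord_le_l1norm x i : `|x i 0| <= l1norm x.
Proof. by rewrite /l1norm (bigD1 i) //= lerDl sumr_ge0. Qed.

Lemma l1norm_le_sqnorm x : l1norm x <= N%:R * Num.sqrt (sqnorm x).
Proof.
rewrite mulr_natl -[X in _ *+ X]card_ord -sumr_const; apply: ler_sum => i _.
rewrite -sqrtr_sqr ler_wsqrtr // /sqnorm /dotv (bigD1 i) //= -expr2 lerDl.
by apply: sumr_ge0 => j _; rewrite -expr2 sqr_ge0.
Qed.

Lemma sqnorm_le_l1norm x : sqnorm x <= l1norm x ^+ 2.
Proof.
rewrite expr2 {2}/l1norm mulr_sumr; apply: ler_sum => i _.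
rewrite (le_trans (ler_norm _)) // normrM.
by apply: ler_wpM2r => //; apply: abs_coord_le_l1norm.
Qed.

Lemma l1norm0 : l1norm (0 : 'cV[R]_N) = 0.
Proof. by rewrite /l1norm big1 // => i _; rewrite mxE normr0. Qed.

Lemma l1normD x y : l1norm (x + y) <= l1norm x + l1norm y.
Proof. by rewrite /l1norm -big_split; apply: ler_sum => i _; rewrite mxE ler_normD. Qed.

Lemma l1norm_sum (I : finType) (S : pred I) (F : I -> 'cV[R]_N) :
  l1norm (\sum_(i | S i) F i) <= \sum_(i | S i) l1norm (F i).
Proof.
elim/big_ind2: _ => [|u a v b ua vb|//]; first by rewrite l1norm0.
by rewrite (le_trans (l1normD _ _)) // lerD.
Qed.

Lemma l1norm_mulmx A x : l1norm (A *m x) <= mx_abs_sum A * l1norm x.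
Proof.
rewrite /l1norm /mx_abs_sum mulr_suml; apply: ler_sum => i _.
rewrite mxE mulr_suml (le_trans (ler_norm_sum _ _ _)) //.
apply: ler_sum => j _; rewrite normrM; apply: ler_wpM2l => //.
exact: abs_coord_le_l1norm.
Qed.

Lemma sqnorm_orth_proj A S x :
  is_orth_proj A S -> sqnorm x = sqnorm (A *m x) + sqnorm (x - A *m x).
Proof.
move=> /(_ x) [SAx /(_ _ SAx)]; move: (A *m x) => u vu0.
rewrite -[in LHS](subrK u x); move: (x - u) vu0 => v vu0.
by rewrite /sqnorm dotvDl !dotvDr (dotvC u v) vu0 addr0 add0r addrC.
Qed.

End Norms.

Section OrderedProduct.
Variables (R : realType) (N : nat) (F : nat -> 'M[R]_N).

Lemma lprod_id m : lprod F m m = 1%:M.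
Proof. by rewrite /lprod /index_iota subnn. Qed.

Lemma lprodSr m n : (m <= n)%N -> lprod F m n.+1 = F n *m lprod F m n.
Proof.
move=> mn; rewrite /lprod /index_iota subSn // -addn1 iotaD foldl_cat.
by rewrite subnKC.
Qed.

Lemma lprod_split m n p : (m <= n)%N -> (n <= p)%N ->
  lprod F m p = lprod F n p *m lprod F m n.
Proof.
move=> mn; elim: p => [|p IHp].
  by rewrite leqn0 => /eqP <-; rewrite lprod_id mul1mx.
rewrite leq_eqVlt => /orP [/eqP <-|np]; first by rewrite lprod_id mul1mx.
by rewrite !lprodSr ?IHp ?mulmxA // (leq_trans mn).
Qed.

End OrderedProduct.

Section ProjectionChain.
Variables (R : realType) (N : nat) (F : nat -> 'M[R]_N) (S : nat -> set 'cV[R]_N).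
Hypothesis F_proj : forall r, is_orth_proj (F r) (S r).
Variables (m : nat) (x : 'cV[R]_N).
Local Notation y r := (lprod F m r *m x).

Lemma sqnorm_lprodSr r : (m <= r)%N ->
  sqnorm (y r) = sqnorm (y r.+1) + sqnorm (y r - y r.+1).
Proof. by move=> mr; rewrite lprodSr // -mulmxA; apply: sqnorm_orth_proj. Qed.

Lemma sqnorm_lprod_nonincr a b : (m <= a)%N -> (a <= b)%N -> sqnorm (y b) <= sqnorm (y a).
Proof.
move=> ma; elim: b => [|b IHb]; first by rewrite leqn0 => /eqP ->.
rewrite leq_eqVlt => /orP [/eqP <-//|ab]; rewrite (le_trans _ (IHb ab)) //.
by rewrite (sqnorm_lprodSr (leq_trans ma ab)) lerDl sqnorm_ge0.
Qed.

Lemma sqnorm_lprod_le n : (m <= n)%N -> sqnorm (y n) <= sqnorm x.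
Proof. by move=> mn; rewrite -{2}[x]mul1mx -(lprod_id F m) sqnorm_lprod_nonincr. Qed.

Lemma sqnorm_lprod_step_le r n : (m <= r)%N -> (r < n)%N ->
  sqnorm (y r - y r.+1) <= sqnorm x - sqnorm (y n).
Proof.
move=> mr rn; have := sqnorm_lprodSr mr.
have := sqnorm_lprod_le mr; have := sqnorm_lprod_nonincr (leqW mr) rn; lra.
Qed.

Lemma l1norm_lprod_drift r n : (m <= r)%N -> (r <= n)%N ->
  l1norm (x - y r) <= (r - m)%:R * (N%:R * Num.sqrt (sqnorm x - sqnorm (y n))).
Proof.
elim: r => [|r IHr] mr rn.
  by rewrite leqn0 in mr; rewrite (eqP mr) lprod_id mul1mx subrr l1norm0 mul0r.
rewrite leq_eqVlt in mr; case/orP: mr => [/eqP <-|mr].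
  by rewrite lprod_id mul1mx subrr l1norm0 mulr_ge0 ?mulr_ge0 ?sqrtr_ge0.
have -> : x - y r.+1 = (x - y r) + (y r - y r.+1) by rewrite addrA subrK.
rewrite (le_trans (l1normD _ _)) //.
rewrite subSn // mulrSr mulrDl mul1r lerD ?IHr ?(ltnW rn) //.
rewrite (le_trans (l1norm_le_sqnorm _)) // ler_wpM2l // ler_wsqrtr //.
exact: sqnorm_lprod_step_le.
Qed.

End ProjectionChain.

Section Gram.
Variables (R : realType) (N : nat) (I : finType) (A : I -> 'M[R]_N).

Definition gram (W : {set I}) : 'M[R]_N := \sum_(p in W) (A p)^T *m A p.

Lemma gram_quad (W : {set I}) (v : 'rV[R]_N) :
  (v *m gram W *m v^T) 0 0 = \sum_(p in W) sqnorm (A p *m v^T).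
Proof.
rewrite /gram mulmx_sumr mulmx_suml summxE; apply: eq_bigr => p _.
by rewrite /sqnorm dotv_trmx trmx_mul trmxK !mulmxA.
Qed.

Lemma gram_unitmx (W : {set I}) :
  (forall v : 'cV[R]_N, (forall p, p \in W -> A p *m v = 0) -> v = 0) -> gram W \in unitmx.
Proof.
move=> ker0; rewrite unitmxE unitfE; apply/negP => /det0P [v v_neq0 vG].
suff /(congr1 trmx) : v^T = 0 by rewrite trmxK trmx0 => v0; rewrite v0 eqxx in v_neq0.
have sum0 : \sum_(p in W) sqnorm (A p *m v^T) = 0 by rewrite -gram_quad vG mul0mx mxE.
apply: ker0 => p Wp; apply/eqP; rewrite -sqnorm_eq0; apply/eqP.
by apply: (psumr_eq0P _ sum0) => // q _; apply: sqnorm_ge0.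
Qed.

Lemma l1norm_le_gram (W : {set I}) (x : 'cV[R]_N) (B : R) :
  gram W \in unitmx -> 0 <= B -> (forall p, p \in W -> l1norm (A p *m x) <= B) ->
  l1norm x <= mx_abs_sum (invmx (gram W)) * ((\sum_p mx_abs_sum (A p)^T) * B).
Proof.
move=> GW B0 AxB; rewrite -{1}(mulKmx GW x) (le_trans (l1norm_mulmx _ _)) //.
rewrite ler_wpM2l ?mx_abs_sum_ge0 // /gram mulmx_suml (le_trans (l1norm_sum _ _)) //.
apply: (@le_trans _ _ (\sum_(p in W) mx_abs_sum (A p)^T * B)).
  apply: ler_sum => p Wp; rewrite -mulmxA (le_trans (l1norm_mulmx _ _)) //.
  by rewrite ler_wpM2l ?mx_abs_sum_ge0 ?AxB.
rewrite mulr_suml [X in _ <= X](bigID (mem W)) /= lerDl sumr_ge0 // => p _.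
by rewrite mulr_ge0 ?mx_abs_sum_ge0.
Qed.

End Gram.

Section LeaderKernel.
Variables (R : realType) (N : nat).
Implicit Types (E : rel 'I_N.+1) (x : 'cV[R]_N).

Lemma Hmat_row E x i : ~~ E (node i) (node i) ->
  (Hmat R E *m x) i 0 = \sum_j adj R E (node i) (node j) * (x i 0 - x j 0)
                        + adj R E (node i) ord0 * x i 0.
Proof.
move=> Eii; rewrite /Hmat mulmxDl mxE; congr (_ + _); last first.
  rewrite mxE (bigD1 i) //= mxE eqxx big1 ?addr0 // => j ji.
  by rewrite mxE eq_sym (negbTE ji) mul0r.
rewrite mxE (bigD1 i) //= !mxE eqxx.
under eq_bigr => j ji do rewrite !mxE eq_sym (negbTE ji).
rewrite (bigD1 i) //= [in RHS](bigD1 i) //= subrr mulr0 add0r.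
rewrite {1}/adj (negbTE Eii) add0r mulr_suml -big_split /=.
by apply: eq_bigr => j _; rewrite mulrBr mulNr.
Qed.

Lemma Hmat_max_in_neighbor E x k a :
  ~~ E (node k) (node k) -> Hmat R E *m x = 0 ->
  (forall l, x l 0 <= x k 0) -> 0 < x k 0 -> E a (node k) ->
  exists2 l, a = node l & x l 0 = x k 0.
Proof.
move=> Ekk Hx0 kmax kpos Eak.
have terms_ge0 l : true -> 0 <= adj R E (node k) (node l) * (x k 0 - x l 0).
  by move=> _; rewrite mulr_ge0 // subr_ge0.
have lead_ge0 : 0 <= adj R E (node k) ord0 * x k 0 by rewrite mulr_ge0 // ltW.
have /eqP := congr1 (fun y : 'cV_N => y k 0) Hx0.
rewrite Hmat_row // mxE paddr_eq0 ?sumr_ge0 // => /andP [/eqP sum0 /eqP lead0].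
case: (unliftP ord0 a) Eak => [l ->|->] Eak; last first.
  by move: lead0; rewrite /adj Eak mul1r => /eqP; rewrite gt_eqF.
rewrite -/(node l) in Eak *; exists l => //.
have /eqP := @psumr_eq0P _ _ _ _ terms_ge0 sum0 l isT.
by rewrite /adj Eak mul1r subr_eq0 => /eqP.
Qed.

Section Union.
Variables (n0 : nat) (E : 'I_n0 -> rel 'I_N.+1) (s : nat -> 'I_n0) (m n : nat).
Hypothesis E_irr : forall p i, ~~ E p i i.
Hypothesis reach : forall i, connect (union_rel E s m n) ord0 (node i).

Lemma union_ker_le0 x :
  (forall r, r \in index_iota m n -> Hmat R (E (s r)) *m x = 0) -> forall i, x i 0 <= 0.
Proof.
move=> Hx0 i; have [k _ kmax] := @arg_maxP _ _ _ i xpredT (fun k => x k 0) isT.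
rewrite leNgt; apply/negP => xi_pos.
have kpos : 0 < x k 0 := lt_le_trans xi_pos (kmax i isT).
(* [top] is closed under in-edges, so reachability would put the leader in it. *)
pose top a := [exists l, (a == node l) && (x l 0 == x k 0)].
have top_back a b : union_rel E s m n a b -> top b -> top a.
  case/hasP=> r r_in Eab /existsP [l /andP [/eqP bl /eqP xl]].
  have lmax l' : x l' 0 <= x l 0 by rewrite xl; apply: kmax.
  have lpos : 0 < x l 0 by rewrite xl.
  have Eal : E (s r) a (node l) by rewrite -bl.
  have [l' al' xl'] := Hmat_max_in_neighbor (E_irr _ _) (Hx0 r r_in) lmax lpos Eal.
  by apply/existsP; exists l'; rewrite al' xl' xl !eqxx.
have /existsP [l /andP [/eqP l0 _]] : top ord0.
  apply: (connect_closed_backward top_back (reach k)).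
  by apply/existsP; exists k; rewrite !eqxx.
by move: (neq_lift ord0 l); rewrite -/(node l) -l0 eqxx.
Qed.

Lemma union_ker_eq0 x :
  (forall r, r \in index_iota m n -> Hmat R (E (s r)) *m x = 0) -> x = 0.
Proof.
move=> Hx0; apply/matrixP => i j; rewrite (ord1 j) mxE; apply/eqP.
have Hnx0 r : r \in index_iota m n -> Hmat R (E (s r)) *m (- x) = 0.
  by move=> r_in; rewrite mulmxN Hx0 ?oppr0.
have := union_ker_le0 Hnx0 i; rewrite mxE oppr_le0 => xi_ge0.
by rewrite eq_le union_ker_le0.
Qed.

End Union.
End LeaderKernel.

Section Window.
Variables (R : realType) (n0 N : nat) (E : 'I_n0 -> rel 'I_N.+1) (P : 'I_n0 -> 'M[R]_N).
Hypothesis E_irr : forall p i, ~~ E p i i.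
Hypothesis P_proj : forall p, is_orth_proj (P p) (kerH (E p)).
Local Notation Hm p := (Hmat R (E p)).

Definition gram_inv_bound :=
  \sum_(W : {set 'I_n0}) mx_abs_sum (invmx (gram (fun p => Hm p) W)).
Definition Hmat_bound := \sum_p mx_abs_sum (Hm p).
Definition trHmat_bound := \sum_p mx_abs_sum (Hm p)^T.
Definition window_const (L : nat) :=
  gram_inv_bound * trHmat_bound * Hmat_bound * L%:R * N%:R.

Variables (s : nat -> 'I_n0) (m n L : nat) (x : 'cV[R]_N).
Hypotheses (mn : (m <= n)%N) (window_len : (n - m <= L)%N).
Local Notation loss := (sqnorm x - sqnorm (lprod (fun r => P (s r)) m n *m x)).

Lemma l1norm_Hmat_window r : (m <= r < n)%N ->
  l1norm (Hm (s r) *m x) <= Hmat_bound * (L%:R * (N%:R * Num.sqrt loss)).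
Proof.
case/andP=> mr rn; set y := lprod (fun r => P (s r)) m r.+1 *m x.
have Hy0 : Hm (s r) *m y = 0.
  by rewrite /y lprodSr // -mulmxA; apply: (P_proj (s r) _).1.
have -> : Hm (s r) *m x = Hm (s r) *m (x - y) by rewrite mulmxBr Hy0 subr0.
rewrite (le_trans (l1norm_mulmx _ _)) //.
apply: ler_pM; rewrite ?mx_abs_sum_ge0 ?l1norm_ge0 ?mx_abs_sum_le_sum //.
have drift := l1norm_lprod_drift (fun r => P_proj (s r)) x (leqW mr) rn.
rewrite (le_trans drift) // ler_wpM2r ?mulr_ge0 ?sqrtr_ge0 // ler_nat; lia.
Qed.

Lemma sqnorm_le_window_loss :
  (forall i, connect (union_rel E s m n) ord0 (node i)) ->
  sqnorm x <= window_const L ^+ 2 * loss.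
Proof.
move=> reach; set W := [set p in [seq s r | r <- index_iota m n]].
set B := Hmat_bound * (L%:R * (N%:R * Num.sqrt loss)).
have B0 : 0 <= B by rewrite !mulr_ge0 ?sqrtr_ge0 // sumr_ge0 // => p _; apply: mx_abs_sum_ge0.
have HxB p : p \in W -> l1norm (Hm p *m x) <= B.
  by rewrite inE => /mapP [r r_in ->]; apply: l1norm_Hmat_window; rewrite -mem_index_iota.
have GW : gram (fun p => Hm p) W \in unitmx.
  apply: gram_unitmx => v Hv0; apply: (union_ker_eq0 E_irr reach) => r r_in.
  by apply: Hv0; rewrite inE map_f.
have x_le : l1norm x <= window_const L * Num.sqrt loss.
  rewrite (le_trans (l1norm_le_gram GW B0 HxB)) // /window_const /B -!mulrA.
  rewrite ler_wpM2r ?(mx_abs_sum_le_sum (fun W => invmx (gram (fun p => Hm p) W))) //.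
  by rewrite !mulr_ge0 ?sqrtr_ge0 // sumr_ge0 // => p _; apply: mx_abs_sum_ge0.
have loss_ge0 : 0 <= loss.
  by rewrite subr_ge0 (sqnorm_lprod_le (fun r => P_proj (s r))).
apply: (le_trans (sqnorm_le_l1norm x)).
rewrite -[loss in X in _ <= X](sqr_sqrtr loss_ge0) -exprMn.
by rewrite !expr2 ler_pM ?l1norm_ge0.
Qed.

End Window.

Section Contraction.
Variables (R : realType) (N : nat).
Implicit Types (x y : 'cV[R]_N) (A : 'M[R]_N).

Lemma enorm_le_of_sqnorm_loss C x y :
  1 <= C -> sqnorm x <= C * (sqnorm x - sqnorm y) ->
  enorm y <= Num.sqrt (1 - C^-1) * enorm x.
Proof.
move=> C1 loss; have C0 : 0 < C by apply: lt_le_trans C1.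
rewrite /enorm -sqrtrM ?subr_ge0 ?invf_le1 // ler_wsqrtr //.
have : sqnorm x / C <= sqnorm x - sqnorm y by rewrite ler_pdivrMr // mulrC.
by rewrite mulrBl mul1r mulrC -/(sqnorm x) -/(sqnorm y); lra.
Qed.

Lemma opnorm_le A c : 0 <= c -> (forall x, enorm (A *m x) <= c * enorm x) -> opnorm A <= c.
Proof.
move=> c0 Ac; apply: ge_sup.
  exists (enorm (A *m 0)), 0 => //=.
  by rewrite /enorm /dotv big1 ?sqrtr0 // => i _; rewrite mxE mul0r.
move=> _ [x x1 <-]; rewrite (le_trans (Ac x)) // -[X in _ <= X]mulr1.
exact: ler_wpM2l.
Qed.

Lemma enorm_lprod_blocks (F : nat -> 'M[R]_N) (jk : nat -> nat) c :
  (forall k, (jk k <= jk k.+1)%N) -> 0 <= c ->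
  (forall k x, enorm (lprod F (jk k) (jk k.+1) *m x) <= c * enorm x) ->
  forall l k x, enorm (lprod F (jk k) (jk (k + l)%N) *m x) <= c ^+ l * enorm x.
Proof.
move=> jk_le c0 block; elim=> [|l IHl] k x.
  by rewrite addn0 lprod_id mul1mx expr0 mul1r.
have jk_mono := homo_leq leqnn leq_trans jk_le.
rewrite addnS (lprod_split _ (jk_mono _ _ (leq_addr l k)) (jk_le _)) -mulmxA.
by rewrite (le_trans (block _ _)) // exprS -mulrA ler_wpM2l.
Qed.

End Contraction.

Lemma switch_count_lt (R : realType) (t : nat -> R) (tau T : R) a b :
  0 < tau -> (forall j, tau <= t j.+1 - t j) -> (a <= b)%N -> t b - t a <= T ->
  (b - a < Num.Def.archi_bound (T / tau))%N.
Proof.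
move=> tau0 dwell ab tabT.
have gap d : d%:R * tau <= t (a + d)%N - t a.
  elim: d => [|d IHd]; first by rewrite addn0 subrr mul0r.
  by rewrite addnS mulrSr mulrDl mul1r; have := dwell (a + d)%N; lra.
have ba_le : (b - a)%:R <= T / tau.
  by rewrite ler_pdivlMr // (le_trans (gap _)) // subnKC.
by rewrite -(ltr_nat R) (le_lt_trans ba_le) // archi_boundP // (le_trans _ ba_le).
Qed.

Theorem corollary1 (R : realType) (n0 N : nat)
  (E : 'I_n0 -> rel 'I_N.+1)
  (P : 'I_n0 -> 'M[R]_N)
  (t : nat -> R) (tau : R) (sigma : R -> 'I_n0)
  (Tc : R) (jk : nat -> nat) :
  (* edges are ordered pairs (j,i) with j <> i *)
  (forall p i, ~~ E p i i) ->
  (* P_p is the orthogonal projection onto ker H_p *)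
  (forall p, is_orth_proj (P p) (kerH (E p))) ->
  (* switching instants with dwell time tau *)
  t 0%N = 0 -> 0 < tau -> (forall j, tau <= t j.+1 - t j) ->
  (* sigma is constant on each [t_j, t_{j+1}) *)
  (forall j s, t j <= s -> s < t j.+1 -> sigma s = sigma (t j)) ->
  (* the subgraph G_sigma(t) is undirected for all t >= 0 *)
  (forall s, 0 <= s -> forall i j : 'I_N,
      E (sigma s) (node j) (node i) = E (sigma s) (node i) (node j)) ->
  (* subsequence of switching instants *)
  0 < Tc -> jk 0%N = 0%N -> (forall k, (jk k < jk k.+1)%N) ->
  (forall k, t (jk k.+1) - t (jk k) <= Tc) ->
  (* joint reachability from node 0 in each union graph *)
  (forall k (i : 'I_N),
      connect (union_rel E (fun r => sigma (t r)) (jk k) (jk k.+1)) ord0 (node i)) ->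
  exists delta : R, 0 < delta /\ delta < 1 /\
    forall l k : nat, (0 < l)%N ->
      opnorm (lprod (fun r => P (sigma (t r))) (jk k) (jk (k + l)%N)) <= delta ^+ l.
Proof.
move=> E_irr P_proj _ tau0 dwell _ _ _ _ jk_lt Tc_bound reach.
set s := fun r => sigma (t r).
set L := Num.Def.archi_bound (Tc / tau).
set C := window_const R E L ^+ 2 + 2.
have C1 : 1 < C by rewrite /C; move: (window_const R E L) => K; have := sqr_ge0 K; lra.
have window_len k : (jk k.+1 - jk k <= L)%N.
  exact/ltnW/(switch_count_lt tau0 dwell (ltnW (jk_lt k)) (Tc_bound k)).
have block k x : enorm (lprod (fun r => P (s r)) (jk k) (jk k.+1) *m x)
                 <= Num.sqrt (1 - C^-1) * enorm x.
  apply: enorm_le_of_sqnorm_loss; first exact: ltW.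
  have jk_le := ltnW (jk_lt k).
  apply: le_trans (sqnorm_le_window_loss E_irr P_proj x jk_le (window_len k) (reach k)) _.
  apply: ler_wpM2r; last by rewrite lerDl.
  by rewrite subr_ge0 (sqnorm_lprod_le (fun r => P_proj (s r))).
exists (Num.sqrt (1 - C^-1)); split; last split.
- by rewrite sqrtr_gt0 subr_gt0 invf_lt1 // (lt_trans ltr01).
- by rewrite -[X in _ < X]sqrtr1 ltr_sqrt ?ltr01 // gtrDl oppr_lt0 invr_gt0 (lt_trans ltr01).
move=> l k _; apply: opnorm_le; first by rewrite exprn_ge0 ?sqrtr_ge0.
apply: (enorm_lprod_blocks _ _ block); [by move=> k'; apply: ltnW | exact: sqrtr_ge0].
Qed.
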